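(* For all integers $k\geq 1$ and $n\geq 3$, $\chi_i(C_{3k}\Box C_n)\leq 6$.
   Context: For a graph $G$, an incidence is a pair $(v,e)$ with $v\in V(G)$, $e\in E(G)$ and $v$ incident with $e$. Two incidences $(v,e)$ and $(w,f)$ are adjacent if $v=w$, or $e=f$, or the edge $vw$ equals $e$ or $f$. An incidence $k$-coloring of $G$ is a map from the set of incidences of $G$ to a set of $k$ colors such that adjacent incidences receive distinct colors; the incidence chromatic number $\chi_i(G)$ is the least such $k$. $C_n$ denotes the cycle on $n$ vertices and $\Box$ the Cartesian product of graphs: $G\Box H$ has vertex set $V(G)\times V(H)$, with $(u_1,v_1)$ adjacent to $(u_2,v_2)$ iff either $u_1=u_2$ and $v_1v_2\in E(H)$, or $v_1=v_2$ and $u_1u_2\in E(G)$. *)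

From mathcomp Require Import all_boot.
Set Implicit Arguments. Unset Strict Implicit. Unset Printing Implicit Defensive.

(* An incidence (v, vw) is encoded as the ordered pair (v, w) with e v w:
   the vertex v together with the edge {v, w}. *)
Definition incidence (T : finType) (e : rel T) (p : T * T) : bool := e p.1 p.2.

Definition inc_adj (T : finType) (e : rel T) (p q : T * T) : bool :=
  let: (v, w) := p in let: (u, z) := q in
  [|| v == u,
      ([set v; w] == [set u; z] :> {set T}),
      (e v u && ([set v; u] == [set v; w] :> {set T})) |
      (e v u && ([set v; u] == [set u; z] :> {set T}))].

Definition incidence_coloring (T : finType) (e : rel T) (k : nat)
    (c : T * T -> 'I_k) : Prop :=
  forall p q, incidence e p -> incidence e q -> p != q ->
    inc_adj e p q -> c p != c q.

(* chi_i(G) <= k  iff  G admits an incidence k-coloring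
   (chi_i is the least such k, so this is the meaning of the bound). *)
Definition inc_colorable (T : finType) (e : rel T) (k : nat) : Prop :=
  exists c : T * T -> 'I_k, incidence_coloring e c.

Definition cycle_adj (m : nat) : rel 'I_m :=
  fun i j => (j == (i.+1 %% m) :> nat) || (i == (j.+1 %% m) :> nat).

Definition box_adj (A B : finType) (ea : rel A) (eb : rel B) : rel (A * B) :=
  fun x y => ((x.1 == y.1) && eb x.2 y.2) || ((x.2 == y.2) && ea x.1 y.1).

Definition cyc_box_adj (m n : nat) : rel ('I_m * 'I_n) :=
  box_adj (@cycle_adj m) (@cycle_adj n).

From mathcomp Require Import all_boot zify.

(* Identify the incidence (v, vw) with the arc v -> w.  Two distinct incidences
   are adjacent exactly when they leave the same vertex or one of them leaves the
   head of the other, so an incidence colouring is an arc colouring that is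
   injective on the arcs leaving each vertex and gives v -> w no colour used on
   an arc leaving w.
   On C_m □ C_n the arcs leaving a vertex point East, West, North and South.  The
   colour of each is read off a table indexed by the column modulo 3 (this is
   where 3 | m is used) and by a row type: along C_n the row types follow a
   closed walk of length n in a pattern graph on ten vertices, made of the
   triangle 0 1 2 traversed repeatedly and one closing cycle of length 4 or 5
   according to n mod 3.  The table was found by computer search; the finitely
   many local constraints it must satisfy are checked by computation. *)

Set Implicit Arguments.
Unset Strict Implicit.
Unset Printing Implicit Defensive.

Section ArcColoring.
Variables (T : finType) (e : rel T) (k : nat) (c : T * T -> 'I_k).

Lemma inc_adj_cases v w u z : inc_adj e (v, w) (u, z) -> [\/ u = v, u = w | z = v].
Proof.
case/or4P => [/eqP -> | /eqP vw_uz | /andP[_ /eqP vu_vw] | /andP[_ /eqP vu_uz]].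
- exact: Or31.
- have: u \in [set v; w] by rewrite vw_uz set21.
  by case/set2P => ->; [apply: Or31 | apply: Or32].
- have: u \in [set v; w] by rewrite -vu_vw set22.
  by case/set2P => ->; [apply: Or31 | apply: Or32].
- have: v \in [set u; z] by rewrite -vu_uz set21.
  by case/set2P => ->; [apply: Or31 | apply: Or33].
Qed.

Lemma arc_coloring_incidence :
    (forall v w z, e v w -> e v z -> c (v, w) = c (v, z) -> w = z) ->
    (forall v w z, e v w -> e w z -> c (v, w) != c (w, z)) ->
  incidence_coloring e c.
Proof.
move=> c_inj c_far [v w] [u z]; rewrite /incidence /= => vw uz neq_pq.
case/inc_adj_cases => ?; subst.
- by apply: contraNneq neq_pq => /(c_inj _ _ _ vw uz) ->; rewrite eqxx.
- exact: c_far.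
- by rewrite eq_sym; apply: c_far.
Qed.

End ArcColoring.

Section CyclicOrdinals.
Variable p : nat.
Implicit Type i : 'I_p.

Lemma ordS_val i : ordS i = (if i.+1 == p then 0 else i.+1) :> nat.
Proof.
rewrite /=; case: eqP => [->|ne]; first exact: modnn.
by rewrite modn_small //; have := ltn_ord i; lia.
Qed.

Lemma cycle_adj_ordS i j : cycle_adj i j -> j = ordS i \/ j = ord_pred i.
Proof.
case/orP => /eqP eq_ij; [left | right]; first exact: val_inj.
by rewrite (_ : i = ordS j) ?ordSK //; apply: val_inj.
Qed.

Hypothesis p_gt2 : 2 < p.

Lemma ordS_neq i : ordS i != i.
Proof.
apply/eqP => /(congr1 (@nat_of_ord p)); rewrite ordS_val.
by have := ltn_ord i; case: ifP; lia.
Qed.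

Lemma ord_pred_neq i : ord_pred i != i.
Proof. by apply: contra_neq (ordS_neq (ord_pred i)) => eq_pi; rewrite ord_predK eq_pi. Qed.

Lemma ord_pred_neq_ordS i : ord_pred i != ordS i.
Proof.
have : ordS (ordS i) != i.
  apply/eqP => /(congr1 (@nat_of_ord p)); rewrite !ordS_val.
  by have := ltn_ord i; do 2 case: ifP => /eqP; lia.
by apply: contra_neq => eq_pS; rewrite -eq_pS ord_predK.
Qed.

End CyclicOrdinals.

Inductive dir := East | West | North | South.

Definition dirs : seq dir := [:: East; West; North; South].

Lemma all_dirsP (P : pred dir) : all P dirs -> forall d, P d.
Proof. by case/and5P=> ? ? ? ? _ []. Qed.

Lemma uniq_dirs_inj (A : eqType) (f : dir -> A) : uniq (map f dirs) -> injective f.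
Proof.
move=> f_uniq d d'; case: d; case: d' => // eq_f;
  by move: f_uniq; rewrite /= eq_f !inE eqxx /= ?orbT ?andbF.
Qed.

Section Torus.
Variables m n : nat.
Implicit Types v w : 'I_m * 'I_n.

Definition step (d : dir) v : 'I_m * 'I_n :=
  match d with
  | East => (ordS v.1, v.2)
  | West => (ord_pred v.1, v.2)
  | North => (v.1, ordS v.2)
  | South => (v.1, ord_pred v.2)
  end.

Definition dir_of v w : dir :=
  if v.2 == w.2 then (if w.1 == ordS v.1 then East else West)
  else if w.2 == ordS v.2 then North else South.

Lemma cyc_box_adj_step v w : cyc_box_adj v w -> exists d, w = step d v.
Proof.
case: v w => [a b] [a' b']; rewrite /cyc_box_adj /box_adj /=.
case/orP => /andP[/eqP <- /cycle_adj_ordS[] ->].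
- by exists North.
- by exists South.
- by exists East.
- by exists West.
Qed.

Hypotheses (m_gt2 : 2 < m) (n_gt2 : 2 < n).

Lemma dir_of_step v d : dir_of v (step d v) = d.
Proof.
rewrite /dir_of; case: d => /=; rewrite ?eqxx //.
- by rewrite (negbTE (ord_pred_neq_ordS m_gt2 _)).
- by rewrite eq_sym (negbTE (ordS_neq n_gt2 _)).
- by rewrite eq_sym (negbTE (ord_pred_neq n_gt2 _)) (negbTE (ord_pred_neq_ordS n_gt2 _)).
Qed.

Lemma torus_inc_colorable k (F : 'I_m * 'I_n -> dir -> 'I_k) :
    (forall v, injective (F v)) -> (forall v d d', F v d != F (step d v) d') ->
  inc_colorable (@cyc_box_adj m n) k.
Proof.
move=> F_inj F_step; exists (fun p => F p.1 (dir_of p.1 p.2)).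
apply: arc_coloring_incidence => v w z /cyc_box_adj_step[d ->] /cyc_box_adj_step[d' ->] /=.
  by rewrite !dir_of_step => /F_inj ->.
by rewrite !dir_of_step.
Qed.

End Torus.

Lemma all_nth (T : Type) (P : pred T) x0 s i : P x0 -> all P s -> P (nth x0 s i).
Proof.
move=> P_x0 /(all_nthP x0) P_s; case: (ltnP i (size s)) => [/P_s // | ge_i].
by rewrite nth_default.
Qed.

Lemma all_iotaP (P : pred nat) n : all P (iota 0 n) -> forall i, i < n -> P i.
Proof. by move=> /allP P_iota i lt_i; apply: P_iota; rewrite mem_iota. Qed.

Lemma cycle_cons_cat (T : Type) (e : rel T) x s u :
  cycle e (x :: s ++ x :: u) = cycle e (x :: s) && cycle e (x :: u).
Proof. by rewrite /= rcons_cat cat_path !rcons_path /= !andbA. Qed.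

Lemma cycle_flatten_nseq (T : Type) (e : rel T) x s t q :
    cycle e (x :: s) -> cycle e (x :: s ++ t) ->
  cycle e (flatten (nseq q.+1 (x :: s)) ++ t).
Proof.
move=> cyc_b cyc_bt; elim: q => [|q IHq]; first by rewrite /= cats0.
have flattenS r : flatten (nseq r.+1 (x :: s)) = x :: s ++ flatten (nseq r (x :: s)) by [].
by rewrite flattenS cat_cons -catA flattenS cat_cons cycle_cons_cat cyc_b -cat_cons -flattenS.
Qed.

Lemma cycle_nth (T : Type) (e : rel T) x0 s i : cycle e s -> i < size s ->
  e (nth x0 s i) (nth x0 s (i.+1 %% size s)).
Proof.
rewrite (cycle_path x0) => /(pathP x0) e_s lt_i.
case: (ltnP i.+1 (size s)) => [lt_Si | ge_Si].
  by rewrite modn_small //; exact: (e_s i.+1).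
have eq_Si : i.+1 = size s by apply/eqP; rewrite eqn_leq lt_i ge_Si.
rewrite eq_Si modnn -[i]/(i.+1.-1) eq_Si nth_last.
by apply: (e_s 0); rewrite -eq_Si.
Qed.

(* Entry [r][t] lists the colours of the arcs leaving a vertex of row type r and
   column type t towards East, West, North and South. *)
Definition color_table : seq (seq (seq nat)) :=
  [:: [:: [:: 0; 1; 2; 3]; [:: 1; 4; 2; 5]; [:: 4; 0; 5; 2]];
      [:: [:: 1; 5; 3; 4]; [:: 4; 0; 5; 3]; [:: 0; 1; 2; 3]];
      [:: [:: 5; 2; 4; 0]; [:: 2; 3; 0; 1]; [:: 3; 4; 1; 5]];
      [:: [:: 0; 2; 5; 1]; [:: 1; 3; 2; 4]; [:: 3; 5; 4; 0]];
      [:: [:: 1; 0; 2; 3]; [:: 4; 5; 3; 0]; [:: 5; 2; 3; 1]];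
      [:: [:: 3; 5; 1; 4]; [:: 5; 0; 4; 2]; [:: 2; 1; 0; 4]];
      [:: [:: 5; 0; 4; 2]; [:: 2; 1; 0; 3]; [:: 3; 4; 1; 5]];
      [:: [:: 1; 4; 2; 3]; [:: 3; 5; 4; 0]; [:: 5; 2; 0; 1]];
      [:: [:: 4; 1; 3; 0]; [:: 0; 5; 3; 2]; [:: 2; 4; 5; 3]];
      [:: [:: 0; 4; 1; 5]; [:: 5; 2; 4; 1]; [:: 2; 3; 0; 1]]].

Definition dir_index (d : dir) : nat :=
  match d with East => 0 | West => 1 | North => 2 | South => 3 end.

Definition pattern_color (t r : nat) (d : dir) : nat :=
  nth 0 (nth [::] (nth [::] color_table r) t) (dir_index d).

Definition row_pairs : seq (nat * nat) :=
  [:: (0, 1); (1, 2); (2, 0); (2, 3); (3, 4); (4, 5); (5, 6);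
      (6, 0); (6, 3); (3, 7); (7, 8); (8, 9); (9, 6)].

Definition row_edge : rel nat := fun r r' => (r, r') \in row_pairs.

Lemma row_edge_lt10 r r' : row_edge r r' -> r < 10.
Proof.
have row_pairs_lt10 : all (fun e => e.1 < 10) row_pairs by [].
by move=> /(allP row_pairs_lt10).
Qed.

Lemma pattern_color_lt6 t r d : pattern_color t r d < 6.
Proof.
have colors_lt6 : all (all (all (fun c => c < 6))) color_table by [].
apply: (@all_nth _ (fun c => c < 6)) => //.
apply: (@all_nth _ (all (fun c => c < 6))) => //.
exact: (@all_nth _ (all (all (fun c => c < 6)))).
Qed.

Lemma pattern_color_inj t r : t < 3 -> r < 10 -> injective (pattern_color t r).
Proof.
suff color_uniq : all (fun t =>
    all (fun r => uniq (map (pattern_color t r) dirs)) (iota 0 10)) (iota 0 3).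
  move=> lt_t lt_r.
  exact/uniq_dirs_inj/(all_iotaP (all_iotaP color_uniq lt_t) lt_r).
by vm_compute.
Qed.

Lemma pattern_color_east t r d : t < 3 -> r < 10 ->
  (pattern_color t r East != pattern_color (t.+1 %% 3) r d) &&
  (pattern_color (t.+1 %% 3) r West != pattern_color t r d).
Proof.
suff colors_ok : all (fun t => all (fun r => all (fun d =>
    (pattern_color t r East != pattern_color (t.+1 %% 3) r d) &&
    (pattern_color (t.+1 %% 3) r West != pattern_color t r d))
    dirs) (iota 0 10)) (iota 0 3).
  by move=> lt_t lt_r; apply: all_dirsP (all_iotaP (all_iotaP colors_ok lt_t) lt_r) d.
by vm_compute.
Qed.

Lemma pattern_color_north t r r' d : t < 3 -> row_edge r r' ->
  (pattern_color t r North != pattern_color t r' d) &&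
  (pattern_color t r' South != pattern_color t r d).
Proof.
suff colors_ok : all (fun t => all (fun e => all (fun d =>
    (pattern_color t e.1 North != pattern_color t e.2 d) &&
    (pattern_color t e.2 South != pattern_color t e.1 d))
    dirs) row_pairs) (iota 0 3).
  by move=> lt_t /(allP (all_iotaP colors_ok lt_t))/all_dirsP.
by vm_compute.
Qed.

Definition col_type (a : nat) : nat := a %% 3.

Lemma col_type_lt3 a : col_type a < 3.
Proof. exact: ltn_pmod. Qed.

Lemma col_type_ordS m (a : 'I_m) : 3 %| m -> col_type (ordS a) = (col_type a).+1 %% 3.
Proof.
by move=> dvd3m; rewrite /col_type /= modn_dvdm // -addn1 -[(a %% 3).+1]addn1 modnDml.
Qed.

Definition triangle_walk : seq nat := [:: 0; 1; 2].

Definition closing_walk (r : nat) : seq nat :=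
  match r with 0 => [::] | 1 => [:: 3; 4; 5; 6] | _ => [:: 3; 7; 8; 9; 6] end.

Definition row_walk n : seq nat :=
  flatten (nseq ((n - size (closing_walk (n %% 3))) %/ 3) triangle_walk)
  ++ closing_walk (n %% 3).

Definition row_type n (b : 'I_n) : nat := nth 0 (row_walk n) b.

Lemma size_row_walk n : 2 < n -> size (row_walk n) = n.
Proof.
rewrite /row_walk size_cat size_flatten /shape map_nseq sumn_nseq.
have : n %% 3 < 3 by rewrite ltn_pmod.
by case E: (n %% 3) => [|[|[|r]]] //= _ n_gt2; lia.
Qed.

Lemma cycle_row_walk n : cycle row_edge (row_walk n).
Proof.
rewrite /row_walk; set t := closing_walk _.
have /andP[cyc_t cyc_tri_t] : cycle row_edge t && cycle row_edge (triangle_walk ++ t).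
  by rewrite /t; case: (n %% 3) => [|[|r]]; vm_compute.
by case: (_ %/ 3) => [|q] //; apply: cycle_flatten_nseq.
Qed.

Lemma row_type_ordS n (b : 'I_n) : 2 < n -> row_edge (row_type b) (row_type (ordS b)).
Proof.
move=> n_gt2; have := cycle_nth 0 (cycle_row_walk n).
by rewrite size_row_walk // => /(_ b (ltn_ord b)).
Qed.

Section TorusColoring.
Variables m n : nat.
Hypotheses (dvd3m : 3 %| m) (n_gt2 : 2 < n).
Implicit Type v : 'I_m * 'I_n.

Definition torus_color v (d : dir) : 'I_6 :=
  Ordinal (pattern_color_lt6 (col_type v.1) (row_type v.2) d).

Lemma row_type_lt10 (b : 'I_n) : row_type b < 10.
Proof. exact: row_edge_lt10 (row_type_ordS b n_gt2). Qed.

Lemma torus_color_inj v : injective (torus_color v).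
Proof.
move=> d d' /(congr1 val) /=.
exact: pattern_color_inj (col_type_lt3 v.1) (row_type_lt10 v.2) d d'.
Qed.

Lemma torus_color_step v d d' : torus_color v d != torus_color (step d v) d'.
Proof.
case: v => a b; rewrite /torus_color -val_eqE /=.
have [lt_a lt_b] := (col_type_lt3 a, row_type_lt10 b).
case: d => /=.
- by rewrite col_type_ordS //; case/andP: (pattern_color_east d' lt_a lt_b).
- rewrite -{1}(ord_predK a) col_type_ordS //.
  by case/andP: (pattern_color_east d' (col_type_lt3 (ord_pred a)) lt_b).
- by case/andP: (pattern_color_north d' lt_a (row_type_ordS b n_gt2)).
- have := row_type_ordS (ord_pred b) n_gt2; rewrite ord_predK.
  by move=> /(pattern_color_north d' lt_a)/andP[].
Qed.

End TorusColoring.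

Theorem lemma1 (k n : nat) : 1 <= k -> 3 <= n ->
  inc_colorable (@cyc_box_adj (3 * k) n) 6.
Proof.
move=> k_gt0 n_gt2.
have m_gt2 : 2 < 3 * k by lia.
have dvd3m : 3 %| 3 * k by rewrite dvdn_mulr.
apply: (torus_inc_colorable m_gt2 n_gt2 (F := @torus_color (3 * k) n)).
- exact: torus_color_inj.
- exact: torus_color_step.
Qed.
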